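(* For any positive contraction $p$ in an operator system $\mathcal V$ we have $\begin{pmatrix} p & p \\ p & p \end{pmatrix} + J_{p \oplus q} = \begin{pmatrix} p & 0 \\ 0 & 0 \end{pmatrix} + J_{p \oplus q}$ and $\begin{pmatrix} q & q \\ q & q \end{pmatrix} + J_{p \oplus q} = \begin{pmatrix} 0 & 0 \\ 0 & q \end{pmatrix} + J_{p \oplus q}$, where $q = e - p$. Consequently the map $\pi_p$ is unital.
   Context: Let $(\mathcal V, \{C_n\}_n, e)$ be an operator system and $0 \leq p \leq e$, $q = e-p$. Define $C(p \oplus q) = \{ x \in M_2(\mathcal V) : x = x^*, \ \forall \epsilon > 0 \ \exists t > 0 \text{ such that } x + \epsilon (p \oplus q) + t (q \oplus p) \in C_2\}$ and $J_{p \oplus q} = \operatorname{span}\big(C(p\oplus q) \cap -C(p \oplus q)\big)$. The map $\pi_p: \mathcal V \to M_2(\mathcal V)/J_{p\oplus q}$ is $\pi_p(x) = \begin{pmatrix} x & x \\ x & x \end{pmatrix} + J_{p \oplus q}$, and the unit of $M_2(\mathcal V)/J_{p\oplus q}$ is $(p \oplus q) + J_{p\oplus q}$. *)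

From HB Require Import structures.
From mathcomp Require Import all_boot all_order all_algebra.
From mathcomp Require Import complex reals.
Set Implicit Arguments. Unset Strict Implicit. Unset Printing Implicit Defensive.
Import Order.TTheory GRing.Theory Num.Theory.
Local Open Scope ring_scope.
Local Open Scope complex_scope.

Section OpSys.
Variables (R : realType) (V : lmodType R[i]).

Definition mxZ (a : R[i]) {m n} (x : 'M[V]_(m, n)) : 'M[V]_(m, n) :=
  map_mx (fun v => a *: v) x.

Definition mxadj (star : V -> V) {n} (x : 'M[V]_n) : 'M[V]_n :=
  \matrix_(r0, c0) star (x c0 r0).

(* adjoint(alpha) x alpha for alpha in M_{n,m}(C), x in M_n(V) *)
Definition mxcong {n m} (a : 'M[R[i]]_(n, m)) (x : 'M[V]_n) : 'M[V]_m :=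
  \matrix_(r0, c0) \sum_(k < n) \sum_(l < n) ((a k r0)^* * a l c0) *: x k l.

Definition eunit (e : V) n : 'M[V]_n := \matrix_(r0, c0) if r0 == c0 then e else 0.

(* Abstract operator system (Choi--Effros): a *-vector space with a matrix
   ordering {C_n} and an Archimedean matrix order unit e. *)
Record opsys := OpSys {
  star : V -> V;
  star_add : forall x y, star (x + y) = star x + star y;
  star_scale : forall (a : R[i]) x, star (a *: x) = a^* *: star x;
  star_invol : forall x, star (star x) = x;
  cone : forall n, 'M[V]_n -> Prop;
  cone_herm : forall n (x : 'M[V]_n), cone x -> mxadj star x = x;
  cone_add : forall n (x y : 'M[V]_n), cone x -> cone y -> cone (x + y);
  cone_scale : forall n (a : R[i]) (x : 'M[V]_n), 0 <= a -> cone x -> cone (mxZ a x);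
  cone_compat : forall n m (a : 'M[R[i]]_(n, m)) (x : 'M[V]_n),
      cone x -> cone (mxcong a x);
  cone_proper : forall n (x : 'M[V]_n), cone x -> cone (- x) -> x = 0;
  ounit : V;
  ounit_herm : star ounit = ounit;
  ounit_order : forall n (x : 'M[V]_n), mxadj star x = x ->
      exists r : R[i], 0 < r /\ cone (mxZ r (eunit ounit n) + x);
  ounit_arch : forall n (x : 'M[V]_n), mxadj star x = x ->
      (forall r : R[i], 0 < r -> cone (mxZ r (eunit ounit n) + x)) -> cone x
}.

Definition mx2 (a b c d : V) : 'M[V]_2 :=
  \matrix_(r0, c0) if r0 == 0 :> 'I_2 then (if c0 == 0 :> 'I_2 then a else b)
                 else (if c0 == 0 :> 'I_2 then c else d).

Definition dsum (a b : V) : 'M[V]_2 := mx2 a 0 0 b.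

Variable S : opsys.

(* positivity in V = C_1 (V identified with M_1(V)) *)
Definition pos (x : V) : Prop := cone S (n := 1) (const_mx x).

Definition pos_contraction (p : V) : Prop := pos p /\ pos (ounit S - p).

Definition Cpq (p q : V) (x : 'M[V]_2) : Prop :=
  mxadj (star S) x = x /\
  forall eps : R[i], 0 < eps -> exists t : R[i], 0 < t /\
    cone S (x + mxZ eps (dsum p q) + mxZ t (dsum q p)).

Definition span2 (A : 'M[V]_2 -> Prop) (x : 'M[V]_2) : Prop :=
  exists (k : nat) (c : 'I_k -> R[i]) (s : 'I_k -> 'M[V]_2),
    (forall m, A (s m)) /\ x = \sum_(m < k) mxZ (c m) (s m).

Definition Jpq (p q : V) : 'M[V]_2 -> Prop :=
  span2 (fun x => Cpq p q x /\ Cpq p q (- x)).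

(* equality of cosets in M_2(V) / J *)
Definition coset_eq (J : 'M[V]_2 -> Prop) (x y : 'M[V]_2) : Prop := J (x - y).

(* pi_p(x) = [[x, x], [x, x]] (before passing to the quotient) *)
Definition pi_rep (x : V) : 'M[V]_2 := mx2 x x x x.

(* pi_p is unital: pi_p(e) = (p ⊕ q) + J_{p⊕q}, the unit of the quotient *)
Definition pi_unital (p : V) : Prop :=
  let q := ounit S - p in coset_eq (Jpq p q) (pi_rep (ounit S)) (dsum p q).

End OpSys.

(* Write x_s = [[0, s p], [s p, s p]] for real s. Given eps > 0, put
   t = s^2/eps + |s| + 1; then x_s + eps (p ⊕ q) + t (q ⊕ p) is the sum of
   eps^-1 [eps s]^* [eps s] ⊗ p and the diagonal matrix
   (t q) ⊕ (eps q + (|s| + s + 1) p), both positive. So x_1 and x_-1 = -x_1 are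
   in C(p ⊕ q), hence x_1 ∈ J_{p⊕q}. Conjugating by the flip [[0,1],[1,0]]
   swaps p and q, giving [[q,q],[q,0]] ∈ J_{p⊕q}. These two matrices are the
   first two differences, and since e = p + q their sum is
   [[e,e],[e,e]] - (p ⊕ q). *)
From HB Require Import structures.
From mathcomp Require Import all_boot all_order all_algebra.
From mathcomp Require Import complex reals.
From mathcomp Require Import ring.
Import Order.TTheory GRing.Theory Num.Theory.
Local Open Scope ring_scope.
Local Open Scope complex_scope.
Set Implicit Arguments. Unset Strict Implicit. Unset Printing Implicit Defensive.

Section Mx2.
Variables (R : realType) (V : lmodType R[i]).
Implicit Types (a b c d : V) (k : R[i]).

Lemma mx2D a b c d a' b' c' d' :
  mx2 a b c d + mx2 a' b' c' d' = mx2 (a + a') (b + b') (c + c') (d + d').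
Proof. by apply/matrixP => i j; rewrite !mxE; case: ifP; case: ifP. Qed.

Lemma mx2N a b c d : - mx2 a b c d = mx2 (- a) (- b) (- c) (- d).
Proof. by apply/matrixP => i j; rewrite !mxE; case: ifP; case: ifP. Qed.

Lemma mx2B a b c d a' b' c' d' :
  mx2 a b c d - mx2 a' b' c' d' = mx2 (a - a') (b - b') (c - c') (d - d').
Proof. by rewrite mx2N mx2D. Qed.

Lemma mx2Z k a b c d : mxZ k (mx2 a b c d) = mx2 (k *: a) (k *: b) (k *: c) (k *: d).
Proof. by apply/matrixP => i j; rewrite !mxE; case: ifP; case: ifP. Qed.

Lemma mxZ1 n (x : 'M[V]_n) : mxZ 1 x = x.
Proof. by apply/matrixP => i j; rewrite !mxE scale1r. Qed.

Lemma mxadj_mx2 (st : V -> V) a b c d :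
  mxadj st (mx2 a b c d) = mx2 (st a) (st c) (st b) (st d).
Proof.
by apply/matrixP => i j; rewrite !mxE; case: i => [[|[|//]]] ?; case: j => [[|[|//]]] ?.
Qed.

Lemma mx2_inj a b c d a' b' c' d' : mx2 a b c d = mx2 a' b' c' d' ->
  [/\ a = a', b = b', c = c' & d = d'].
Proof.
move=> /matrixP E; have := E 0 0; have := E 0 1; have := E 1 0; have := E 1 1.
by rewrite !mxE.
Qed.

End Mx2.

Section OperatorSystem.
Variables (R : realType) (V : lmodType R[i]) (S : opsys V).
Implicit Types (a b c d v : V) (k : R[i]).

Lemma star0 : star S 0 = 0.
Proof. by rewrite -(scale0r 0) star_scale conjC0 !scale0r. Qed.

Lemma star_scale_real k v : k \is Num.real -> star S (k *: v) = k *: star S v.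
Proof. by move=> kR; rewrite star_scale (conj_Creal kR). Qed.

Lemma herm_mx2 a b c d :
  mxadj (star S) (mx2 a b c d) = mx2 a b c d <->
  [/\ star S a = a, star S b = c & star S d = d].
Proof.
rewrite mxadj_mx2; split; first by case/mx2_inj.
by case=> -> <- ->; rewrite star_invol.
Qed.

Lemma pos_herm v : pos S v -> star S v = v.
Proof. by move=> /cone_herm /matrixP /(_ 0 0); rewrite !mxE. Qed.

Lemma posD v w : pos S v -> pos S w -> pos S (v + w).
Proof.
move=> hv hw; have := cone_add hv hw.
by congr (cone S _); apply/matrixP => i j; rewrite !mxE.
Qed.

Lemma posZ k v : 0 <= k -> pos S v -> pos S (k *: v).
Proof.
move=> hk hv; have := cone_scale hk hv.
by congr (cone S _); apply/matrixP => i j; rewrite !mxE.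
Qed.

Lemma cone_outer v u0 u1 : pos S v ->
  cone S (mx2 ((u0^* * u0) *: v) ((u0^* * u1) *: v)
              ((u1^* * u0) *: v) ((u1^* * u1) *: v)).
Proof.
pose a : 'M[R[i]]_(1, 2) := \row_j if j == 0 then u0 else u1.
move=> /(cone_compat a); congr (cone S _).
by apply/matrixP => i j; rewrite !mxE !big_ord1 !mxE;
  case: i => [[|[|//]]] ?; case: j => [[|[|//]]] ?.
Qed.

Lemma cone_outer_real v u0 u1 : u0 \is Num.real -> u1 \is Num.real -> pos S v ->
  cone S (mx2 ((u0 * u0) *: v) ((u0 * u1) *: v) ((u0 * u1) *: v) ((u1 * u1) *: v)).
Proof.
move=> u0R u1R /(cone_outer u0 u1).
by rewrite (conj_Creal u0R) (conj_Creal u1R) (mulrC u1).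
Qed.

Lemma cone_dsum a d : pos S a -> pos S d -> cone S (dsum a d).
Proof.
move=> /(cone_outer 1 0) ha /(cone_outer 0 1) hd; have := cone_add ha hd.
rewrite /dsum mx2D conjC0 conjC1 !(mulr0, mul0r, mulr1, scale0r, scale1r).
by rewrite !(addr0, add0r).
Qed.

Lemma cone_swap a b c d : cone S (mx2 a b c d) -> cone S (mx2 d c b a).
Proof.
pose w : 'M[R[i]]_2 := \matrix_(i, j) (i != j)%:R.
move=> /(cone_compat w); congr (cone S _).
apply/matrixP => i j; rewrite !mxE !big_ord_recl !big_ord0 !mxE /=.
by case: i => [[|[|//]]] ?; case: j => [[|[|//]]] ?;
  rewrite /= ?conjC0 ?conjC1 !(mulr0, mul0r, mulr1, scale0r, scale1r, addr0, add0r).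
Qed.

End OperatorSystem.

Section Span.
Variables (R : realType) (V : lmodType R[i]) (A : 'M[V]_2 -> Prop).

Lemma span2_gen x : A x -> span2 A x.
Proof. by move=> Ax; exists 1, (fun=> 1), (fun=> x); rewrite big_ord1 mxZ1. Qed.

Lemma split_lshift m n (i : 'I_m) : split (lshift n i) = inl i.
Proof. exact: (unsplitK (inl i)). Qed.

Lemma split_rshift m n (j : 'I_n) : split (rshift m j) = inr j.
Proof. exact: (unsplitK (inr j)). Qed.

Lemma span2D x y : span2 A x -> span2 A y -> span2 A (x + y).
Proof.
case=> [k [c [s [As ->]]]] [l [d [t [At ->]]]].
pose join T (f : 'I_k -> T) (g : 'I_l -> T) (m : 'I_(k + l)) :=
  match split m with inl i => f i | inr j => g j end.
exists (k + l), (join _ c d), (join _ s t); split.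
  by move=> m; rewrite /join; case: (split m).
by rewrite big_split_ord /join; congr (_ + _); apply: eq_bigr => i _;
  rewrite ?split_lshift ?split_rshift.
Qed.

End Span.

Section Cpq.
Variables (R : realType) (V : lmodType R[i]) (S : opsys V) (p q : V).
Implicit Types (a b c d : V) (s : R[i]).

Lemma Cpq_swap a b c d : Cpq S p q (mx2 a b c d) -> Cpq S q p (mx2 d c b a).
Proof.
case=> /herm_mx2 [ha hb hd] hC; split.
  by apply/herm_mx2; split=> //; rewrite -hb star_invol.
move=> eps /hC [t [t_gt0 hcone]]; exists t; split=> //.
by move: hcone; rewrite /dsum !mx2Z !mx2D => /cone_swap.
Qed.

Lemma Cpq_mx2p s : s \is Num.real -> pos S p -> pos S q ->
  Cpq S p q (mx2 0 (s *: p) (s *: p) (s *: p)).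
Proof.
move=> sR hp hq; split.
  by apply/herm_mx2; rewrite star0 star_scale_real // pos_herm.
move=> eps eps_gt0; have eR := gtr0_real eps_gt0.
have eps_neq0 := lt0r_neq0 eps_gt0.
have ieps_ge0 : 0 <= eps^-1 by rewrite invr_ge0 ltW.
have ss_ge0 : 0 <= s * s by rewrite -expr2 -(real_normK sR) exprn_ge0.
have ns_ge0 : 0 <= `|s| + s.
  by have := @real_ler_norm _ (- s); rewrite realN normrN -subr_ge0 opprK; apply.
pose t := s * s / eps + `|s| + 1.
have t_gt0 : 0 < t.
  exact: ltr_wpDl (addr_ge0 (divr_ge0 ss_ge0 (ltW eps_gt0)) (normr_ge0 s)) ltr01.
exists t; split=> //.
have := cone_add
  (cone_scale ieps_ge0 (cone_outer_real eR sR hp))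
  (cone_dsum (posZ (ltW t_gt0) hq)
             (posD (posZ (ltW eps_gt0) hq) (posZ (addr_ge0 ns_ge0 ler01) hp))).
rewrite /dsum !mx2Z !mx2D !scalerA; congr (cone S (mx2 _ _ _ _)).
- by rewrite add0r; congr (_ *: _ + _); field.
- by rewrite !scaler0 !addr0; congr (_ *: _); field.
- by rewrite !scaler0 !addr0; congr (_ *: _); field.
- rewrite [LHS]addrCA [RHS]addrAC -!scalerDl [LHS]addrC.
  by congr (_ *: _ + _); rewrite /t; field.
Qed.

End Cpq.

Section Jpq.
Variables (R : realType) (V : lmodType R[i]) (S : opsys V) (p q : V).
Hypotheses (hp : pos S p) (hq : pos S q).

Lemma Jpq_mx2p : Jpq S p q (mx2 0 p p p).
Proof.
apply: span2_gen; rewrite mx2N oppr0 -scaleN1r; split.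
  by have := Cpq_mx2p (real1 _) hp hq; rewrite scale1r.
by apply: Cpq_mx2p; rewrite // realN real1.
Qed.

Lemma Jpq_mx2q : Jpq S p q (mx2 q q q 0).
Proof.
apply: span2_gen; rewrite mx2N oppr0 -scaleN1r; split; apply: Cpq_swap.
  by have := Cpq_mx2p (real1 _) hq hp; rewrite scale1r.
by apply: Cpq_mx2p; rewrite // realN real1.
Qed.

End Jpq.

Theorem lemma5p6 (R : realType) (V : lmodType R[i]) (S : opsys V) (p : V) :
  pos_contraction S p ->
  let q := ounit S - p in
  coset_eq (Jpq S p q) (mx2 p p p p) (mx2 p 0 0 0) /\
  coset_eq (Jpq S p q) (mx2 q q q q) (mx2 0 0 0 q) /\
  pi_unital S p.
Proof.
move=> [hp hq] q; have Jp := Jpq_mx2p hp hq; have Jq := Jpq_mx2q hp hq.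
rewrite /pi_unital /coset_eq /pi_rep /dsum -/q !mx2B !subrr !subr0.
have -> : mx2 (ounit S - p) (ounit S) (ounit S) (ounit S - q) =
          mx2 0 p p p + mx2 q q q 0.
  by rewrite mx2D /q add0r addr0 subrKC opprB subrKC.
by split; [|split] => //; apply: span2D.
Qed.
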